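(* Let $E$ be a Banach space and let $C\subset E$. Suppose either (a) $T:C\to C$ is firmly nonexpansive, or (b) $C$ is convex and $T:C\to C$ is averaged nonexpansive. If there exists a nonempty bounded set $D\subset C$ such that $T(D)=D$, then every point of $D$ is a fixed point of $T$, i.e. $D\subset \mathrm{Fix}\,T=\{x\in C: Tx=x\}$. In particular, $\mathrm{Fix}\,T$ is nonempty.
   Context: A mapping $T:C\to C$ is firmly nonexpansive if $\|Tx-Ty\|\le \|\alpha(x-y)+(1-\alpha)(Tx-Ty)\|$ for all $x,y\in C$ and all $\alpha\in(0,1)$. For convex $C$, a mapping $T:C\to C$ is averaged nonexpansive if $T=\alpha I+(1-\alpha)S$ for some $\alpha\in(0,1)$ and some nonexpansive $S:C\to C$ (i.e. $\|Sx-Sy\|\le\|x-y\|$ for all $x,y\in C$), where $I$ is the identity. *)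

From HB Require Import structures.
From mathcomp Require Import all_boot all_order all_algebra.
From mathcomp Require Import all_classical all_reals all_analysis.
Set Implicit Arguments. Unset Strict Implicit. Unset Printing Implicit Defensive.
Import Order.TTheory GRing.Theory Num.Theory.
Import numFieldNormedType.Exports.
Local Open Scope classical_set_scope.
Local Open Scope ring_scope.

(* Maps T : E -> E regarded as maps C -> C. *)
Definition maps_into {E : Type} (C : set E) (T : E -> E) : Prop :=
  forall x, C x -> C (T x).

Definition nonexpansive_on {R : realType} {E : normedModType R}
  (C : set E) (S : E -> E) : Prop :=
  forall x y, C x -> C y -> `|S x - S y| <= `|x - y|.

Definition firmly_nonexpansive {R : realType} {E : normedModType R}
  (C : set E) (T : E -> E) : Prop :=
  maps_into C T /\
  forall x y, C x -> C y -> forall a : R, 0 < a -> a < 1 ->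
    `|T x - T y| <= `|a *: (x - y) + (1 - a) *: (T x - T y)|.

Definition convex_subset {R : realType} {E : normedModType R} (C : set E) : Prop :=
  forall x y, C x -> C y -> forall t : R, 0 <= t -> t <= 1 ->
    C (t *: x + (1 - t) *: y).

Definition averaged_nonexpansive {R : realType} {E : normedModType R}
  (C : set E) (T : E -> E) : Prop :=
  maps_into C T /\
  exists a : R, 0 < a /\ a < 1 /\
  exists S : E -> E, maps_into C S /\ nonexpansive_on C S /\
    forall x, C x -> T x = a *: x + (1 - a) *: S x.

Definition bounded_subset {R : realType} {E : normedModType R} (D : set E) : Prop :=
  exists M : R, forall x, D x -> `|x| <= M.

Definition Fix {E : Type} (C : set E) (T : E -> E) : set E :=
  [set x | C x /\ T x = x].

From HB Require Import structures.
From mathcomp Require Import all_boot all_order all_algebra.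
From mathcomp Require Import all_classical all_reals all_analysis.
From mathcomp Require Import ring lra.
Set Implicit Arguments.
Unset Strict Implicit.
Unset Printing Implicit Defensive.
Import Order.TTheory GRing.Theory Num.Theory.
Import numFieldNormedType.Exports.
Local Open Scope classical_set_scope.
Local Open Scope ring_scope.

(* Since T maps D onto D, every point x of D has a backward orbit in D, and for
   every N the forward T-orbit of its N-th backward point is an orbit in D that
   reaches x at step N and T x at step N + 1.  Boundedness of such orbits forces
   |x - T x| = 0.
   For a firmly nonexpansive T (used with a = 1/2) the distances
   f(i,k) = |z_i - z_(i+k)| along an orbit satisfy
   2 f(i+1,k+1) <= f(i+1,k) + f(i,k+2); comparison with an explicit quadratic
   supersolution yields N K |z_N - z_(N+1)| <= diam D * (N + K (K - 1)), and
   letting N and then K grow kills the step.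
   For T = a I + (1 - a) S the displacement |u - S u| does not increase along
   T-orbits, so along the backward orbit it is nondecreasing and bounded, hence
   almost constant on long windows; the Goebel-Kirk inequality applied on such
   a window of length n bounds (1 + n (1 - a)) |x - S x| independently of n. *)

Lemma nat_mul_bounded_le0 (R : archiRealFieldType) (c U : R) :
  (forall n : nat, n%:R * c <= U) -> c <= 0.
Proof.
move=> hU; rewrite leNgt; apply/negP => c0.
have := archi_boundP (normr_ge0 (U / c)).
set n := Num.Def.archi_bound _ => hn.
have : U / c < n%:R by apply: le_lt_trans (ler_norm _) hn.
by rewrite ltr_pdivrMr // ltNge hU.
Qed.

Lemma bounded_subset_dist (R : realType) (E : normedModType R) (D : set E) :
  bounded_subset D -> exists B, forall u v, D u -> D v -> `|u - v| <= B.
Proof.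
move=> [M hM]; exists (M + M) => u v Du Dv.
exact: le_trans (ler_normB _ _) (lerD (hM _ Du) (hM _ Dv)).
Qed.

Lemma image_eq_maps_into (U : Type) (D : set U) (T : U -> U) :
  T @` D = D -> maps_into D T.
Proof. by move=> TD u Du; rewrite -TD; exists u. Qed.

Lemma maps_into_iter (U : Type) (D : set U) (T : U -> U) (j : nat) :
  maps_into D T -> maps_into D (iter j T).
Proof. by move=> DT; elim: j => [|j IH] u Du //=; apply/DT/IH. Qed.

Lemma surj_backward_orbit (U : Type) (D : set U) (T : U -> U) (x : U) :
  T @` D = D -> D x ->
  exists b : nat -> U, [/\ b 0%N = x, forall k, D (b k) & forall k, T (b k.+1) = b k].
Proof.
move=> TD Dx.
have [p hp] : {p : U -> U & forall z, D z -> D (p z) /\ T (p z) = z}.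
  apply: (@choice _ _ (fun z w => D z -> D w /\ T w = z)) => z.
  have [Dz|nDz] := pselect (D z); last by exists z.
  by move: Dz; rewrite -{1}TD => -[w Dw <-]; exists w.
have Dit k : D (iter k p x) by elim: k => [|k IH] //=; case: (hp _ IH).
by exists (fun k => iter k p x); split=> // k /=; case: (hp _ (Dit k)).
Qed.

Lemma iter_backward_orbit (U : Type) (T : U -> U) (b : nat -> U) :
  (forall k, T (b k.+1) = b k) -> forall j m, iter j T (b (j + m)%N) = b m.
Proof. by move=> Tb; elim=> [|j IH] m //; rewrite iterSr addSn Tb IH. Qed.

(* A supersolution of 2 f(i+1,k+1) = f(i+1,k) + f(i,k+2) on the grid
   [0,n] x [0,K] that is at least 2 n K on the edges i = 0 and k = K and
   nonnegative on the edge k = 0. *)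
Definition halving_majorant (R : pzRingType) (n K i k : nat) : R :=
  2 * n%:R * k%:R + K%:R * (K%:R * k%:R - k%:R ^+ 2 - k%:R - 2 * i%:R + K%:R + 2 * n%:R).

Section HalvingMajorant.
Variables (R : realDomainType) (n K : nat).
Local Notation psi := (halving_majorant R n K).

Lemma halving_majorant_rec i k : psi i.+1 k + psi i k.+2 = 2 * psi i.+1 k.+1.
Proof. by rewrite /halving_majorant -!natr1; ring. Qed.

Lemma halving_majorant_k0_ge0 i : (i <= n)%N -> 0 <= psi i 0.
Proof.
rewrite -(ler_nat R) => hi; rewrite /halving_majorant.
have : (0 : R) <= K%:R by []. nra.
Qed.

Lemma halving_majorant_ge_i0 k : (k <= K)%N -> 2 * n%:R * K%:R <= psi 0 k.
Proof.
rewrite -(ler_nat R) => hk; rewrite /halving_majorant.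
have : (0 : R) <= K%:R * (K%:R - k%:R) * (k%:R + 1).
  by rewrite !mulr_ge0 ?subr_ge0 ?addr_ge0.
have : (0 : R) <= n%:R * k%:R by rewrite mulr_ge0.
lra.
Qed.

Lemma halving_majorant_ge_kK i : (i <= n)%N -> 2 * n%:R * K%:R <= psi i K.
Proof.
rewrite -(ler_nat R) => hi; rewrite /halving_majorant.
have : (0 : R) <= K%:R by []. nra.
Qed.

End HalvingMajorant.

Lemma halving_recurrence_bound (R : realDomainType) (f : nat -> nat -> R) (B : R)
    (n K : nat) :
  (forall i, f i 0%N = 0) -> (forall i k, f i k <= B) ->
  (forall i k, 2 * f i.+1 k.+1 <= f i.+1 k + f i k.+2) ->
  forall i k, (i <= n)%N -> (k <= K)%N ->
    2 * n%:R * K%:R * f i k <= B * halving_majorant R n K i k.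
Proof.
move=> f0 fB frec.
have B0 : 0 <= B by rewrite -(f0 0%N) fB.
have nK0 : 0 <= 2 * n%:R * K%:R :> R by [].
have boundary i k : 2 * n%:R * K%:R <= halving_majorant R n K i k ->
    2 * n%:R * K%:R * f i k <= B * halving_majorant R n K i k.
  move=> hpsi; apply: le_trans (ler_wpM2l nK0 (fB i k)) _.
  by rewrite mulrC ler_wpM2l.
elim=> [|i IH] k hi hk; first by apply/boundary/halving_majorant_ge_i0.
elim: k hk => [|k IHk] hk.
  by rewrite f0 mulr0 mulr_ge0 ?halving_majorant_k0_ge0.
have [hkK|hKk] := ltnP k.+1 K; last first.
  have -> : k.+1 = K by apply/eqP; rewrite eqn_leq hk hKk.
  exact/boundary/halving_majorant_ge_kK.
have := IHk (ltnW hk); have := IH k.+2 (ltnW hi) hkK.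
have := frec i k; have := halving_majorant_rec R n K i k.
nra.
Qed.

Lemma firmly_nonexpansive_half (R : realType) (E : normedModType R) (C : set E)
    (T : E -> E) (x y : E) :
  firmly_nonexpansive C T -> C x -> C y ->
  2 * `|T x - T y| <= `|(x - y) + (T x - T y)|.
Proof.
move=> [_ hT] Cx Cy.
have half_gt0 : 0 < 2^-1 :> R by rewrite invr_gt0.
have half_lt1 : 2^-1 < 1 :> R by rewrite invf_lt1 ?ltr1n.
have := hT x y Cx Cy _ half_gt0 half_lt1.
rewrite (_ : 1 - 2^-1 = 2^-1 :> R); last by field.
by rewrite -scalerDr normrZ gtr0_norm // ler_pdivlMl.
Qed.

Lemma firm_orbit_dist_rec (R : realType) (E : normedModType R) (C : set E)
    (T : E -> E) (z : nat -> E) :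
  firmly_nonexpansive C T -> (forall j, C (z j)) -> (forall j, z j.+1 = T (z j)) ->
  forall i k, 2 * `|z i.+1 - z (i.+1 + k.+1)%N|
    <= `|z i.+1 - z (i.+1 + k)%N| + `|z i - z (i + k.+2)%N|.
Proof.
move=> firm Cz zT i k.
have := firmly_nonexpansive_half firm (Cz i) (Cz (i + k.+1)%N).
rewrite -!zT addSn -addnS addrACA [- _ - _]addrC addrACA addSnnS => h.
by apply: le_trans h _; rewrite addrC ler_normD.
Qed.

Lemma firm_orbit_rate (R : realType) (E : normedModType R) (C : set E) (T : E -> E)
    (z : nat -> E) (B : R) (N K : nat) :
  firmly_nonexpansive C T -> (forall j, C (z j)) -> (forall j, z j.+1 = T (z j)) ->
  (forall i j, `|z i - z j| <= B) -> (0 < K)%N ->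
  2 * N%:R * K%:R * `|z N - z N.+1| <= B * (2 * N%:R + 2 * K%:R * (K%:R - 1)).
Proof.
move=> firm Cz zT zB K_gt0.
have := @halving_recurrence_bound R (fun i k => `|z i - z (i + k)%N|) B N K.
move=> /(_ _ _ _ N 1%N (leqnn N) K_gt0); rewrite addn1.
have -> : halving_majorant R N K N 1 = 2 * N%:R + 2 * K%:R * (K%:R - 1).
  by rewrite /halving_majorant; ring.
apply.
- by move=> i; rewrite addn0 subrr normr0.
- by move=> i k; apply: zB.
- exact: firm_orbit_dist_rec firm Cz zT.
Qed.

Lemma firmly_nonexpansive_surj_fixed (R : realType) (E : normedModType R)
    (C D : set E) (T : E -> E) :
  firmly_nonexpansive C T -> D `<=` C -> bounded_subset D -> T @` D = D ->
  forall x, D x -> T x = x.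
Proof.
move=> firm DC /bounded_subset_dist[B DB] TD x Dx.
have [b [b0 Db Tb]] := surj_backward_orbit TD Dx.
have B0 : 0 <= B by rewrite -(normr0 E) -(subrr x) DB.
have rate N K : (0 < K)%N ->
    2 * N%:R * K%:R * `|x - T x| <= B * (2 * N%:R + 2 * K%:R * (K%:R - 1)).
  pose z j := iter j T (b N).
  have Dz j : D (z j) by apply: maps_into_iter (Db N); apply: image_eq_maps_into.
  have zN : z N = x by rewrite /z -[in b N](addn0 N) iter_backward_orbit.
  rewrite -zN -[T (z N)]/(z N.+1); apply: firm_orbit_rate firm _ _ _ => //.
  - by move=> j; apply/DC/Dz.
  - by move=> i j; apply: DB.
have step_le K : K%:R * `|x - T x| <= B.
  case: K => [|K]; first by rewrite mul0r.
  rewrite -subr_le0.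
  apply: (@nat_mul_bounded_le0 _ _ (B * (K.+1%:R * (K.+1%:R - 1)))) => N.
  have := rate N K.+1 isT; lra.
by apply/eqP; rewrite eq_sym -subr_eq0 -normr_le0; apply: nat_mul_bounded_le0 step_le.
Qed.

Lemma subr_affine_comb (R : pzRingType) (V : lmodType R) (a : R) (p q r : V) :
  p - (a *: q + (1 - a) *: r) = a *: (p - q) + (1 - a) *: (p - r).
Proof.
rewrite !scalerBr [(1 - a) *: p]scalerBl scale1r opprD !addrA; congr (_ - _).
by rewrite addrAC [a *: p - _ - _]addrAC subrr add0r addrC.
Qed.

Lemma norm_sub_affine_comb (R : numDomainType) (E : normedModType R) (a : R)
    (u v : E) :
  a <= 1 -> `|u - (a *: u + (1 - a) *: v)| = (1 - a) * `|u - v|.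
Proof.
move=> a_le1.
by rewrite subr_affine_comb subrr scaler0 add0r normrZ ger0_norm ?subr_ge0.
Qed.

Lemma averaged_displacement_le (R : realDomainType) (E : normedModType R)
    (S : E -> E) (a : R) (u v : E) :
  0 <= a -> a <= 1 -> v = a *: u + (1 - a) *: S u -> `|S u - S v| <= `|u - v| ->
  `|v - S v| <= `|u - S u|.
Proof.
move=> a_ge0 a_le1 vE S_le.
have -> : v - S v = a *: (u - S u) + (S u - S v).
  by rewrite {1}vE scalerBr scalerBl scale1r !addrA; congr (_ - _); rewrite addrAC.
apply: le_trans (ler_normD _ _) _; rewrite normrZ ger0_norm //.
have : `|u - v| = (1 - a) * `|u - S u| by rewrite vE norm_sub_affine_comb.
lra.
Qed.

Lemma exprn_bernoulli_le1 (R : realDomainType) (a : R) (n : nat) :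
  0 <= a -> a <= 1 -> a ^+ n * (1 + n%:R * (1 - a)) <= 1.
Proof.
move=> a_ge0 a_le1; elim: n => [|n IH]; first by rewrite expr0 mul0r addr0 mulr1.
have an_ge0 : 0 <= a ^+ n by rewrite exprn_ge0.
have : a * (1 + n.+1%:R * (1 - a)) <= 1 + n%:R * (1 - a).
  have : 0 <= (1 - a) ^+ 2 * n.+1%:R by rewrite mulr_ge0 ?sqr_ge0.
  rewrite -natr1; nra.
move=> /(ler_wpM2l an_ge0); rewrite exprS -mulrA; lra.
Qed.

Section GoebelKirk.
Variables (R : realDomainType) (E : normedModType R) (S : E -> E) (a : R) (y : nat -> E).
Hypotheses (a_ge0 : 0 <= a) (a_le1 : a <= 1).
Hypothesis y_step : forall j, y j.+1 = a *: y j + (1 - a) *: S (y j).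
Hypothesis S_nonexp : forall i j, `|S (y i) - S (y j)| <= `|y i - y j|.

Lemma orbit_displacement_nonincr i m :
  `|y (i + m)%N - S (y (i + m)%N)| <= `|y i - S (y i)|.
Proof.
elim: m => [|m IH]; first by rewrite addn0.
rewrite addnS; apply: le_trans IH.
exact: averaged_displacement_le a_ge0 a_le1 (y_step _) (S_nonexp _ _).
Qed.

Lemma orbit_dist_le i m : `|y (i + m)%N - y i| <= m%:R * (1 - a) * `|y i - S (y i)|.
Proof.
elim: m => [|m IH]; first by rewrite addn0 subrr normr0 !mul0r.
have step : `|y (i + m).+1 - y (i + m)%N| <= (1 - a) * `|y i - S (y i)|.
  rewrite distrC y_step norm_sub_affine_comb //.
  by rewrite ler_wpM2l ?subr_ge0 ?orbit_displacement_nonincr.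
apply: le_trans (ler_distD (y (i + m)%N) _ _) _.
rewrite addnS -natr1; lra.
Qed.

Lemma goebel_kirk_ineq n i :
  a ^+ n * ((1 + n%:R * (1 - a)) * `|y i - S (y i)| - `|S (y (i + n)%N) - y i|)
    <= `|y i - S (y i)| - `|y (i + n)%N - S (y (i + n)%N)|.
Proof.
elim: n i => [|n IH] i; first by rewrite expr0 mul0r addr0 !mul1r addn0 distrC.
pose d j := `|y j - S (y j)|; set m := (i + n.+1)%N.
rewrite -/(d i) -/(d m).
set X := `|S (y m) - y i|; set Y := `|S (y m) - y i.+1|.
have IHi : a ^+ n * ((1 + n%:R * (1 - a)) * d i.+1 - Y) <= d i.+1 - d m.
  by have := IH i.+1; rewrite addSnnS.
have Y_le : Y <= a * X + (1 - a) * (n.+1%:R * (1 - a) * d i).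
  rewrite /Y y_step subr_affine_comb.
  apply: le_trans (ler_normD _ _) _; rewrite !normrZ !ger0_norm ?subr_ge0 //.
  rewrite lerD2l ler_wpM2l ?subr_ge0 //.
  exact: le_trans (S_nonexp _ _) (orbit_dist_le _ _).
have an_ge0 : 0 <= a ^+ n by rewrite exprn_ge0.
have bern := exprn_bernoulli_le1 n a_ge0 a_le1.
have d_step : d i.+1 <= d i by have := orbit_displacement_nonincr i 1; rewrite addn1.
have h1 : 0 <= a ^+ n * (a * X + (1 - a) * (n.+1%:R * (1 - a) * d i) - Y).
  by rewrite mulr_ge0 // subr_ge0.
have h2 : 0 <= (1 - a ^+ n * (1 + n%:R * (1 - a))) * (d i - d i.+1).
  by rewrite mulr_ge0 ?subr_ge0.
rewrite exprS -natr1 in h1 *; nra.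
Qed.

End GoebelKirk.

Lemma nondecreasing_bounded_small_increment (R : archiRealFieldType) (e : nat -> R)
    (U : R) :
  (forall k, e k <= e k.+1) -> (forall k, e k <= U) ->
  forall n eps, 0 < eps -> exists N, e (N + n)%N - e N <= eps.
Proof.
move=> e_nondecr e_le n eps eps_gt0; apply: contrapT => small_incr.
have big_incr N : eps < e (N + n)%N - e N.
  by rewrite ltNge; apply/negP => le_eps; apply: small_incr; exists N.
have e_growth m : e 0%N + m%:R * eps <= e (m * n)%N.
  elim: m => [|m IH]; first by rewrite mul0n mul0r addr0.
  rewrite mulSn addnC -natr1; have := big_incr (m * n)%N; lra.
have : eps <= 0.
  apply: (@nat_mul_bounded_le0 _ _ (U - e 0%N)) => m.
  by have := e_le (m * n)%N; have := e_growth m; lra.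
by rewrite leNgt eps_gt0.
Qed.

Lemma averaged_surj_fixed (R : realType) (E : normedModType R) (C D : set E)
    (T : E -> E) :
  averaged_nonexpansive C T -> D `<=` C -> bounded_subset D -> T @` D = D ->
  forall x, D x -> T x = x.
Proof.
move=> [_ [a [a_gt0 [a_lt1 [S [_ [S_nonexp TE]]]]]]] DC.
move=> /bounded_subset_dist[B DB] TD x Dx.
have [b [b0 Db Tb]] := surj_backward_orbit TD Dx.
have DT := image_eq_maps_into TD.
have a_ge0 := ltW a_gt0; have a_le1 := ltW a_lt1.
have TE_D u : D u -> T u = a *: u + (1 - a) *: S u by move/DC; apply: TE.
pose e k := `|b k - S (b k)|.
have e_nondecr k : e k <= e k.+1.
  apply: averaged_displacement_le a_ge0 a_le1 _ _; first by rewrite -TE_D ?Tb.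
  by apply: S_nonexp; apply: DC.
have e_le k : e k <= B / (1 - a).
  rewrite ler_pdivlMr ?subr_gt0 // mulrC -norm_sub_affine_comb // -TE_D //.
  exact/DB/DT.
have e0_le k : e 0%N <= e k.
  by elim: k => [|k IH] //; apply: le_trans IH (e_nondecr k).
have bound n : a ^+ n * ((1 + n%:R * (1 - a)) * e 0%N - (B / (1 - a) + B)) <= 0.
  apply/ler_addgt0Pr => eps eps_gt0; rewrite add0r.
  have [N small] := nondecreasing_bounded_small_increment e_nondecr e_le n eps_gt0.
  pose y j := iter j T (b (N + n)%N).
  have Dy j : D (y j) by apply: maps_into_iter.
  have y_step j : y j.+1 = a *: y j + (1 - a) *: S (y j).
    by rewrite [y _.+1]iterS TE_D; last exact: Dy.
  have S_y i j : `|S (y i) - S (y j)| <= `|y i - y j| by apply: S_nonexp; apply: DC.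
  have yn : y n = b N by rewrite /y addnC iter_backward_orbit.
  have := goebel_kirk_ineq a_ge0 a_le1 y_step S_y n 0%N.
  rewrite add0n yn -/(e N) -[y 0%N]/(b (N + n)%N) -/(e (N + n)%N) => gk.
  apply: le_trans small; apply: le_trans gk.
  rewrite ler_wpM2l ?exprn_ge0 // lerB ?ler_wpM2l ?e0_le ?addr_ge0 ?mulr_ge0 ?subr_ge0 //.
  apply: le_trans (ler_distD (b N) _ _) _.
  by rewrite distrC lerD //; [exact: e_le | exact: DB].
have e0_le0 : (1 - a) * e 0%N <= 0.
  apply: (@nat_mul_bounded_le0 _ _ (B / (1 - a) + B - e 0%N)) => n.
  by have := bound n; rewrite pmulr_rle0 ?exprn_gt0 //; lra.
apply/eqP; rewrite eq_sym -subr_eq0 -normr_le0 TE_D // -b0.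
by rewrite norm_sub_affine_comb.
Qed.

Theorem theorem3p3 (R : realType) (E : completeNormedModType R)
  (C : set E) (T : E -> E) :
  (firmly_nonexpansive C T \/ (convex_subset C /\ averaged_nonexpansive C T)) ->
  forall D : set E, D `<=` C -> D !=set0 -> bounded_subset D -> T @` D = D ->
    D `<=` Fix C T /\ Fix C T !=set0.
Proof.
move=> hT D DC [x0 Dx0] Dbd TD.
have D_fix : D `<=` Fix C T.
  move=> x Dx; split; first exact: DC.
  case: hT => [firm | [_ avg]].
  - exact: firmly_nonexpansive_surj_fixed firm DC Dbd TD x Dx.
  - exact: averaged_surj_fixed avg DC Dbd TD x Dx.
by split=> //; exists x0; apply: D_fix.
Qed.
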